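(* Consider a system in general triangular form (GTF) with states $z^1,\dots,z^n$, drift vector field \[ a = \sum_{i=1}^{k_1-1} z^{i+1}\partial_{z^i} + \sum_{i=k_1+1}^{k_1+k_2-1} z^{i+1}\partial_{z^i} + \sum_{l=k_1+k_2}^{n-1} a^l\,\partial_{z^l}, \] and input vector fields $b_1 = \partial_{z^{k_1}} + \sum_{l=k_1+k_2}^{n-1} b^l\,\partial_{z^l}$, $b_2 = \partial_{z^n}$. Define $D_0=0$, $D_1 = \mathrm{span}\{b_1,b_2\}$ and $D_{i+1} = D_i + [a,D_i]$ for $i=1,\dots,p$, and assume that $D_1,\dots,D_p$ are involutive and $D_{p+1}$ is non-involutive. Assume further that $D_{p-1}\subset D_p\subset D_{p+1}$ with corank $2$ at each inclusion, that $D_p\not\subset \mathcal{C}(D_{p+1})$, that $[a,D_{p-1}]\subset D_p$ and $D_{p+1} = D_p + [a,D_p]$. Then $v_c := \partial_{z^{n-(p-1)}}$ is a valid choice of the vector field $v_c$ in the following sense: with $v_1 = \mathrm{ad}_a^{p-1} b_1$ and $v_2 = \partial_{z^{n-(p-1)}}$ one has $D_p = D_{p-1} + \mathrm{span}\{v_1,v_2\}$, and $(\alpha^1,\alpha^2) = (0,1)$ is a nontrivial solution of \[ (\alpha^1)^2[v_1,[v_1,a]] + 2\alpha^1\alpha^2[v_1,[v_2,a]] + (\alpha^2)^2[v_2,[v_2,a]] \in D_{p+1}, \] so that $v_c = \alpha^1 v_1 + \alpha^2 v_2 = \partial_{z^{n-(p-1)}}$ is a candidate vector field $v_c\in D_p$,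 $v_c\notin D_{p-1}$, for which $H_1 = D_{p-1}+\mathrm{span}\{v_c\}$ and $H_2 = D_p + \mathrm{span}\{[a,v_c]\}$ could satisfy $H_1\subset\mathcal{C}(H_2)$.
   Context: The general triangular form (GTF) with integers $k_1,k_2\ge1$, $k_1+k_2\le n$, states $z^1,\dots,z^n$ and inputs $v^1,v^2$ is $\dot z = a(z) + b_1(z)v^1 + b_2(z)v^2$ with $a,b_1,b_2$ as in the claim, i.e. $\dot z^i = z^{i+1}$ ($i=1,\dots,k_1-1$), $\dot z^{k_1}=v^1$, $\dot z^i = z^{i+1}$ ($i=k_1+1,\dots,k_1+k_2-1$), $\dot z^l = a^l(z^1,\dots,z^{l+1}) + b^l(z^1,\dots,z^{l+1})v^1$ ($l=k_1+k_2,\dots,n-1$), $\dot z^n = v^2$, where $b^{k_1+k_2}\neq0$ and for each $l$, $\partial_{z^{l+1}}a^l\ne0$ or $\partial_{z^{l+1}}b^l\ne0$. All objects are smooth, distributions have locally constant rank, statements are local at generic points. $[v,w]$ is the Lie bracket; $\mathrm{ad}_a b = [a,b]$, $\mathrm{ad}_a^{i} b = [a,\mathrm{ad}_a^{i-1}b]$, $\mathrm{ad}_a^0 b = b$; for distributions, $[D_1,D_2]$ is the span of brackets of their basis vector fields and $[v,D]$ the span of brackets of $v$ with basis fields of $D$. The Cauchy characteristic distribution $\mathcal{C}(D)$ is spanned by all $v\in D$ with $[v,D]\subset D$. ''Corank $2$'' for $D\subset D'$ means $\dim D' - \dim D = 2$. *)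

From HB Require Import structures.
From mathcomp Require Import all_boot all_order all_algebra.
From mathcomp Require Import all_classical all_reals all_analysis.
Set Implicit Arguments. Unset Strict Implicit. Unset Printing Implicit Defensive.
Import Order.TTheory GRing.Theory Num.Theory.
Import numFieldNormedType.Exports.
Local Open Scope classical_set_scope.
Local Open Scope ring_scope.

Section GTF.
Variables (R : realType) (n : nat).

Definition pt := 'rV[R]_n.
Definition vf := pt -> pt.

(* 1-based coordinate z^j of a point (0 if j is out of range) *)
Definition zc (x : pt) (j : nat) : R :=
  oapp (fun t : 'I_n => x 0 t) 0 (insub j.-1).

(* unit vector / constant coordinate vector field d/dz^j (1-based j) *)
Definition coordvf (j : nat) : vf := fun _ => \row_(i < n) (i.+1 == j)%N%:R.

(* partial derivative d/dz^(i+1) of a scalar function (0-based i) *)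
Definition partial (i : 'I_n) (f : pt -> R) : pt -> R :=
  fun x => derive f x (delta_mx 0 i).
Definition partialz (j : nat) (f : pt -> R) : pt -> R :=
  fun x => derive f x (coordvf j x).

Definition smooth (f : pt -> R) : Prop :=
  forall (s : seq 'I_n) (x : pt), differentiable (foldr partial f s) x.

(* Lie bracket [v,w] = Dw.v - Dv.w  (so that [v,w]f = v(wf) - w(vf)) *)
Definition bracket (v w : vf) : vf := fun x => derive w x (v x) - derive v x (w x).

(* A distribution is given by a finite list of generating vector fields;
   its value at x is the row space of the matrix of their values. *)
Definition distr := seq vf.
Definition spanat (D : distr) (x : pt) : 'M[R]_(size D, n) :=
  \matrix_(i < size D) nth (fun _ => 0) D i x.

Definition adD (a : vf) (D : distr) : distr := map (bracket a) D.

Fixpoint Dseq (a b1 b2 : vf) (i : nat) : distr :=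
  match i with
  | 0 => [::]
  | 1 => [:: b1; b2]
  | j.+1 => Dseq a b1 b2 j ++ adD a (Dseq a b1 b2 j)
  end.

Definition involutive_on (D : distr) (U : set pt) : Prop :=
  forall v w, v \in D -> w \in D -> forall x, U x ->
    (bracket v w x <= spanat D x)%MS.

Definition characteristic (v : vf) (D : distr) (U : set pt) : Prop :=
  (forall i : 'I_n, smooth (fun x => v x 0 i)) /\
  (forall x, U x -> (v x <= spanat D x)%MS) /\
  (forall w, w \in D -> forall x, U x -> (bracket v w x <= spanat D x)%MS).

Definition subset_cauchy (D1 D2 : distr) (U : set pt) : Prop :=
  forall x, U x -> exists cs : seq vf,
    (forall c, c \in cs -> characteristic c D2 U) /\ (spanat D1 x <= spanat cs x)%MS.

(* the GTF drift a and input fields b1, b2 (indices m are 1-based) *)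
Definition gtf_a (k1 k2 : nat) (aa : nat -> pt -> R) : vf := fun x =>
  \row_(i < n) let m := i.+1 in
    if (m < k1)%N then zc x m.+1
    else if ((k1 < m) && (m < k1 + k2))%N then zc x m.+1
    else if ((k1 + k2 <= m) && (m < n))%N then aa m x
    else 0.

Definition gtf_b1 (k1 k2 : nat) (bb : nat -> pt -> R) : vf := fun x =>
  \row_(i < n) let m := i.+1 in
    if m == k1 then 1
    else if ((k1 + k2 <= m) && (m < n))%N then bb m x
    else 0.

Definition gtf_b2 : vf := coordvf n.

End GTF.

Definition rankat (R : realType) (n : nat) (D : distr R n) (x : pt R n) : nat :=
  \rank (spanat D x).

(* Write w_j := ad_a^j b2 with b2 = d/dz^n, so that D_(j+1) = D_j + span{ad_a^j b1, w_j}.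
   Since each component a^l of the drift depends only on z^1, ..., z^(l+1), the field
   w_j has no component along d/dz^1, ..., d/dz^(n-j-1).
   Under constant rank, the growth of the D_j cannot restart once it has dropped: if
   D_(j+1) exceeds D_j by at most one direction, then near the base point one of the two
   new generators is a smooth combination of D_j and the other one, so bracketing with a
   adds at most one direction to D_(j+1). As D_(p+1) exceeds D_p by two directions,
   w_j is not in D_j for j <= p, and by induction D_j contains d/dz^(n-j+1), ..., d/dz^n,
   the field d/dz^(n-j) entering D_(j+1) through w_j. For j = p - 1 this gives
   D_p = D_(p-1) + span{v1, v2} with v2 = d/dz^(n-p+1) not in D_(p-1), and
   [v2, [v2, a]] = d^2 a / (dz^(n-p+1))^2 has no component along d/dz^1, ..., d/dz^(n-p-1),
   so it lies in D_(p+1). *)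

From HB Require Import structures.
From mathcomp Require Import all_boot all_order all_algebra.
From mathcomp Require Import all_classical all_reals all_analysis.
From mathcomp Require Import ring zify.
Set Implicit Arguments. Unset Strict Implicit. Unset Printing Implicit Defensive.
Import Order.TTheory GRing.Theory Num.Theory.
Import numFieldNormedType.Exports.
Local Open Scope classical_set_scope.
Local Open Scope ring_scope.

Section Smoothness.
Variables (R : realType) (n : nat).
Local Notation pt := (pt R n).
Local Notation partial := (@partial R n).
Local Notation smooth := (@smooth R n).
Implicit Types (f g : pt -> R) (x : pt).

Lemma smooth_differentiable f x : smooth f -> differentiable f x.
Proof. by move=> sf; apply: (sf [::]). Qed.

Lemma smooth_partial f i : smooth f -> smooth (partial i f).
Proof. by move=> sf s x; have := sf (rcons s i) x; rewrite foldr_rcons. Qed.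

Fixpoint differentiable_upto (N : nat) f : Prop :=
  (forall x, differentiable f x) /\
  (if N is N'.+1 then forall i, differentiable_upto N' (partial i f) else True).

Lemma smoothE f : smooth f <-> forall N, differentiable_upto N f.
Proof.
split=> [sf N | df s].
  elim: N f sf => [|N IH] f sf.
    by split=> // x; apply: smooth_differentiable.
  by split=> [x|i]; [apply: smooth_differentiable | apply/IH/smooth_partial].
elim/last_ind: s f df => [|s i IH] f df x /=; first by case: (df 0%N).
by rewrite foldr_rcons; apply: IH => N; case: (df N.+1) => _; apply.
Qed.

Lemma differentiable_uptoW N f :
  differentiable_upto N.+1 f -> differentiable_upto N f.
Proof. by elim: N f => [|N IH] f [df dpf]; split=> // i; apply/IH/dpf. Qed.

Lemma partialD f g i : (forall x, differentiable f x) ->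
  (forall x, differentiable g x) -> partial i (f \+ g) = partial i f \+ partial i g.
Proof.
move=> df dg; apply/funext => x.
by rewrite /partial deriveD //; apply: diff_derivable.
Qed.

Lemma partialM f g i : (forall x, differentiable f x) ->
  (forall x, differentiable g x) ->
  partial i (f \* g) = (partial i f \* g) \+ (f \* partial i g).
Proof.
move=> df dg; apply/funext => x.
rewrite /partial deriveM /=; try exact: diff_derivable.
by rewrite /GRing.scale /=; ring.
Qed.

Lemma partial_cst (c : R) i : partial i (fun=> c) = fun=> 0.
Proof. by apply/funext => x; rewrite /partial derive_cst. Qed.

Lemma differentiable_uptoD N f g : differentiable_upto N f ->
  differentiable_upto N g -> differentiable_upto N (f \+ g).
Proof.
elim: N f g => [|N IH] f g [df dpf] [dg dpg].
  by split=> // x; apply: differentiableD.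
split=> [x|i]; first exact: differentiableD.
by rewrite partialD //; apply: IH; [apply: dpf | apply: dpg].
Qed.

Lemma differentiable_uptoM N f g : differentiable_upto N f ->
  differentiable_upto N g -> differentiable_upto N (f \* g).
Proof.
elim: N f g => [|N IH] f g Cf Cg; case: (Cf) => df dpf; case: (Cg) => dg dpg.
  by split=> // x; apply: differentiableM.
split=> [x|i]; first exact: differentiableM.
rewrite partialM //; apply: differentiable_uptoD; apply: IH;
  by [apply: dpf | apply: dpg | apply: differentiable_uptoW].
Qed.

Lemma smooth_cst (c : R) : smooth (fun=> c).
Proof.
apply/smoothE => N; elim: N c => [|N IH] c.
  by split=> // x; apply: differentiable_cst.
by split=> [x|i]; [apply: differentiable_cst | rewrite partial_cst; apply: IH].
Qed.

Lemma smoothD f g : smooth f -> smooth g -> smooth (f \+ g).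
Proof. by move=> /smoothE sf /smoothE sg; apply/smoothE => N; apply: differentiable_uptoD. Qed.

Lemma smoothM f g : smooth f -> smooth g -> smooth (f \* g).
Proof. by move=> /smoothE sf /smoothE sg; apply/smoothE => N; apply: differentiable_uptoM. Qed.

Lemma smoothN f : smooth f -> smooth (fun x => - f x).
Proof.
move=> sf; have -> : (fun x => - f x) = (fun=> -1) \* f.
  by apply/funext => x /=; rewrite mulN1r.
exact/smoothM/sf/smooth_cst.
Qed.

Lemma smooth_sum (I : Type) (r : seq I) (F : I -> pt -> R) :
  (forall i, smooth (F i)) -> smooth (fun x => \sum_(i <- r) F i x).
Proof.
move=> sF; elim: r => [|i r IH].
  by under eq_fun do rewrite big_nil; exact: smooth_cst.
by under eq_fun do rewrite big_cons; exact: smoothD.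
Qed.

Lemma derive_coord x (v : pt) t : derive (fun y : pt => y 0 t) x v = v 0 t.
Proof.
have := @derive_mx R _ 1 n id x v (@derivable_id _ _ x v).
by rewrite derive_id => /(congr1 (fun M : 'M[R]_(1, n) => M 0 t)); rewrite mxE.
Qed.

Lemma smooth_coord t : smooth (fun y : pt => y 0 t).
Proof.
apply/smoothE => -[|N]; split=> //; try by move=> x; apply: differentiable_coord.
move=> i.
have -> : partial i (fun y : pt => y 0 t) = fun=> (delta_mx 0 i : pt) 0 t.
  by apply/funext => y; rewrite /partial derive_coord.
by have /smoothE := smooth_cst ((delta_mx 0 i : pt) 0 t).
Qed.

Lemma derive_partialE f x (v : pt) : differentiable f x ->
  derive f x v = \sum_i v 0 i * partial i f x.
Proof.
move=> df; rewrite deriveE // {1}(row_sum_delta v) linear_sum.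
by apply: eq_bigr => i _; rewrite linearZ /= /partial deriveE.
Qed.

End Smoothness.

Section SmoothVectorFields.
Variables (R : realType) (n : nat).
Local Notation pt := (pt R n).
Local Notation vf := (vf R n).
Local Notation partial := (@partial R n).
Local Notation smooth := (@smooth R n).

Definition smooth_vf (v : vf) := forall k : 'I_n, smooth (fun x => v x 0 k).

Lemma derive_smooth_vf (v : vf) x (d : pt) k : smooth_vf v ->
  derive v x d 0 k = derive (fun y => v y 0 k) x d.
Proof.
move=> sv; rewrite derive_mx ?mxE //.
apply/derivable_mxP => i j; rewrite (ord1 i).
exact/diff_derivable/smooth_differentiable.
Qed.

Lemma bracketE (v w : vf) x k : smooth_vf v -> smooth_vf w ->
  bracket v w x 0 k =
  derive (fun y => w y 0 k) x (v x) - derive (fun y => v y 0 k) x (w x).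
Proof. by move=> sv sw; rewrite /bracket !mxE !derive_smooth_vf. Qed.

Lemma bracket_antisym (v w : vf) x : bracket v w x = - bracket w v x.
Proof. by rewrite /bracket opprB. Qed.

Lemma smooth_vf_bracket (v w : vf) :
  smooth_vf v -> smooth_vf w -> smooth_vf (bracket v w).
Proof.
move=> sv sw k.
have -> : (fun x => bracket v w x 0 k) =
    (fun x => \sum_i v x 0 i * partial i (fun y => w y 0 k) x) \+
    (fun x => - \sum_i w x 0 i * partial i (fun y => v y 0 k) x).
  apply/funext => x; rewrite bracketE // !derive_partialE //;
  exact: smooth_differentiable.
by apply/smoothD/smoothN; apply: smooth_sum => i; apply/smoothM/smooth_partial.
Qed.

Lemma smooth_vf_iter (a b : vf) k :
  smooth_vf a -> smooth_vf b -> smooth_vf (iter k (bracket a) b).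
Proof. by move=> sa sb; elim: k => //= k; apply: smooth_vf_bracket. Qed.

Lemma bracket_lincomb (a g : vf) r (c : 'I_r -> pt -> R) (e : 'I_r -> vf) x0 :
  smooth_vf a -> smooth_vf g -> (forall i, smooth_vf (e i)) ->
  (forall i, differentiable (c i) x0) ->
  (\forall y \near x0, g y = \sum_i c i y *: e i y) ->
  bracket a g x0 =
  \sum_i (derive (c i) x0 (a x0) *: e i x0 + c i x0 *: bracket a (e i) x0).
Proof.
move=> sa sg se dc gE; apply/rowP => k.
have gEk : \forall y \near x0, g y 0 k = (\sum_i (fun y => c i y * e i y 0 k)) y.
  by apply: filterS gE => y ->; rewrite fct_sumE summxE; apply: eq_bigr => i _; rewrite mxE.
rewrite bracketE // (near_eq_derive _ gEk) derive_sum; last first.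
  by move=> i; apply/diff_derivable/differentiableM/smooth_differentiable/se.
rewrite (nbhs_singleton gE) deriveE; last exact/smooth_differentiable/sa.
rewrite linear_sum summxE -sumrB; apply: eq_bigr => i _.
rewrite linearZ /= -deriveE; last exact/smooth_differentiable/sa.
rewrite deriveM; [| exact/diff_derivable | exact/diff_derivable/smooth_differentiable/se].
by rewrite !mxE !derive_smooth_vf // /GRing.scale /=; ring.
Qed.

Lemma smooth_vf_coordvf j : smooth_vf (@coordvf R n j).
Proof. by move=> k; under eq_fun do rewrite mxE; apply: smooth_cst. Qed.

Lemma coordvfE (K : 'I_n) x : @coordvf R n K.+1 x = delta_mx 0 K.
Proof. by apply/rowP => k; rewrite !mxE eqSS. Qed.

(* Components are 0-based: [v x 0 k] is the d/dz^(k+1)-component of [v] at [x]. *)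
Definition vanishes_below (L : nat) (v : vf) :=
  forall x (k : 'I_n), (k < L)%N -> v x 0 k = 0.

Definition triangular (v : vf) := forall (k : 'I_n) (x y : pt),
  (forall i : 'I_n, (i <= k.+1)%N -> x 0 i = y 0 i) -> v x 0 k = v y 0 k.

Lemma vanishes_belowW L L' v :
  (L' <= L)%N -> vanishes_below L v -> vanishes_below L' v.
Proof. by move=> le v0 x k kL; apply: v0; apply: leq_trans le. Qed.

Lemma vanishes_below_coordvf j : vanishes_below j.-1 (@coordvf R n j).
Proof. by move=> x k kj; rewrite mxE; case: eqP => // E; move: kj; rewrite -E ltnn. Qed.

Lemma derive_vanishes_below L (v : vf) x (d : pt) (k : 'I_n) :
  vanishes_below L v -> (k < L)%N -> derive (fun y => v y 0 k) x d = 0.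
Proof.
move=> v0 kL; have -> : (fun y => v y 0 k) = fun=> 0 by apply/funext => y; apply: v0.
exact: derive_cst.
Qed.

Lemma derive_const_line (f : pt -> R) x (d : pt) :
  (forall h : R, f (h *: d + x) = f x) -> derive f x d = 0.
Proof.
move=> fd; rewrite /derive.
have -> : (fun h : R => h^-1 *: ((f \o shift x) (h *: d) - f x)) = fun=> 0.
  by apply/funext => h /=; rewrite fd subrr scaler0.
exact: lim_cst.
Qed.

Lemma partial_triangular (a : vf) (k i : 'I_n) x : triangular a ->
  (k.+1 < i)%N -> partial i (fun y => a y 0 k) x = 0.
Proof.
move=> ta ki; apply: derive_const_line => h; apply: ta => j jk.
rewrite !mxE /=; have /negbTE -> : j != i.
  by apply: contraTneq ki => <-; rewrite -leqNgt.
by rewrite mulr0 add0r.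
Qed.

Lemma vanishes_below_bracket L (v w : vf) : smooth_vf v -> smooth_vf w ->
  vanishes_below L v -> vanishes_below L w -> vanishes_below L (bracket v w).
Proof.
move=> sv sw v0 w0 x k kL.
by rewrite bracketE // !(derive_vanishes_below _ _ _ kL) // subrr.
Qed.

Lemma vanishes_below_bracket_triangular L (a w : vf) :
  smooth_vf a -> triangular a -> smooth_vf w ->
  vanishes_below L w -> vanishes_below L.-1 (bracket a w).
Proof.
move=> sa ta sw w0 x k kL.
have kL' : (k < L)%N by apply: leq_trans kL (leq_pred _).
rewrite bracketE // (derive_vanishes_below _ _ _ kL') // sub0r.
rewrite derive_partialE ?big1 ?oppr0 // => [i _|]; last exact: smooth_differentiable.
have [iL|Li] := ltnP i L; first by rewrite w0 ?mul0r.
by rewrite partial_triangular ?mulr0 //; apply: leq_trans Li; rewrite -ltn_predRL.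
Qed.

Lemma vanishes_below_iter L (a w : vf) i :
  smooth_vf a -> triangular a -> smooth_vf w ->
  vanishes_below L w -> vanishes_below (L - i) (iter i (bracket a) w).
Proof.
move=> sa ta sw w0; elim: i => [|i IH]; first by rewrite subn0.
rewrite subnS; apply: vanishes_below_bracket_triangular => //.
exact: smooth_vf_iter.
Qed.

End SmoothVectorFields.

Section RowSpaces.
Variables (F : fieldType) (n : nat).
Implicit Types (u v w d : 'rV[F]_n).

Lemma mxrank_sub_adds_row m1 m2 (A : 'M[F]_(m1, n)) (B : 'M[F]_(m2, n)) v :
  (B <= A + v)%MS -> (\rank B <= \rank A + 1)%N.
Proof.
move=> sB; apply: leq_trans (mxrankS sB) _.
have [le _] := mxrank_adds_leqif A v.
by apply: leq_trans le _; rewrite leq_add2l rank_leq_row.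
Qed.

Lemma sub_adds_exchange m (S : 'M[F]_(m, n)) v d :
  (v <= d + S)%MS -> ~~ (v <= S)%MS -> (d <= v + S)%MS.
Proof.
case/sub_addsmxP => -[c s] /= ->; rewrite (mx11_scalar c) mul_scalar_mx.
have [->|c0] := eqVneq (c 0 0) 0; first by rewrite scale0r add0r submxMl.
move=> _; set vS := _ + _.
have -> : d = (c 0 0)^-1 *: (vS - s *m S) by rewrite addrK scalerA mulVf ?scale1r.
rewrite scalemx_sub // addmx_sub ?addsmxSl // -mulNmx.
exact: submx_trans (submxMl _ _) (addsmxSr _ _).
Qed.

Lemma adds_rank_le1 m (A : 'M[F]_(m, n)) u w :
  (\rank (A + (u + w)) <= \rank A + 1)%N ->
  (A + (u + w) <= A + u)%MS \/ (A + (u + w) <= A + w)%MS.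
Proof.
move=> le1; have [uA|uA] := boolP (u <= A)%MS.
  right; rewrite addsmx_sub addsmxSl addsmx_sub addsmxSr andbT.
  exact: submx_trans uA (addsmxSl _ _).
left; have sAu : (A + u <= A + (u + w))%MS by rewrite addsmxS ?addsmxSl.
rewrite -(mxrank_leqif_sup sAu).2 eqn_leq mxrankS //= (leq_trans le1) // addn1.
by apply: rank_ltmx; rewrite ltmxE addsmxSl addsmx_sub submx_refl.
Qed.

Lemma unitmx_minor_exists m (A : 'M[F]_(m, n)) :
  exists (f : 'I_(\rank A) -> 'I_m) (h : 'I_(\rank A) -> 'I_n),
    colsub h (rowsub f A) \in unitmx.
Proof.
set B := rowsub (maxrankfun A) A.
have fullBt : row_full B^T by rewrite /row_full mxrank_tr; apply: maxrowsub_free.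
exists (maxrankfun A), (fullrankfun fullBt).
rewrite -unitmx_tr (_ : _^T = rowsub (fullrankfun fullBt) B^T) ?fullrowsub_unit //.
by apply/matrixP => i j; rewrite !mxE.
Qed.

Lemma rank_unitmx_colsub r (B : 'M[F]_(r, n)) (h : 'I_r -> 'I_n) :
  colsub h B \in unitmx -> \rank B = r.
Proof.
move=> U; apply/eqP; rewrite eqn_leq rank_leq_row -{1}(mxrank_unit U).
by rewrite -{1}[B]mulmx1 -mulmx_colsub mxrankM_maxl.
Qed.

Lemma coef_unitmx_minor r (B : 'M[F]_(r, n)) (h : 'I_r -> 'I_n) (c : 'rV[F]_r) :
  colsub h B \in unitmx ->
  c = (\det (colsub h B))^-1 *: (colsub h (c *m B) *m \adj (colsub h B)).
Proof.
rewrite unitmxE unitfE => det0.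
by rewrite -mulmx_colsub -mulmxA mul_mx_adj mul_mx_scalar scalerA mulVf ?scale1r.
Qed.

End RowSpaces.

(* [copid_mx L] spans the coordinate rows [delta_mx 0 k] with [k >= L]. *)
Section CoordinateSubspaces.
Variables (F : fieldType) (n : nat).
Implicit Types (v : 'rV[F]_n) (K L : nat).

Lemma copid_mxE L (i j : 'I_n) : copid_mx L i j = ((i == j) && (L <= i)%N)%:R :> F.
Proof.
rewrite /copid_mx !mxE; have [<- | /negbTE ne] := eqVneq i j.
  by rewrite !eqxx /=; case: ltnP; rewrite ?subrr ?subr0.
by rewrite val_eqE ne subrr.
Qed.

Lemma sub_copid_mxP L v :
  reflect (forall k : 'I_n, (k < L)%N -> v 0 k = 0) (v <= copid_mx L)%MS.
Proof.
apply: (iffP idP) => [/submxP [c ->] k kL | v0].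
  rewrite mxE big1 // => i _; rewrite copid_mxE.
  by case: eqP => [-> | _] /=; rewrite ?mulr0 // leqNgt kL mulr0.
apply/submxP; exists v; apply/rowP => j; rewrite mxE (bigD1 j) //= big1.
  by rewrite copid_mxE eqxx /=; case: ltnP => [/v0 ->|]; rewrite ?mulr0 ?mulr1 addr0.
by move=> i /negbTE ij; rewrite copid_mxE ij mulr0.
Qed.

Lemma copid_mxS K L : (K <= L)%N -> (@copid_mx F n L <= @copid_mx F n K)%MS.
Proof.
move=> KL; apply/row_subP => i; apply/sub_copid_mxP => k kK.
rewrite mxE copid_mxE; case: eqP => [ik|] //=.
by rewrite ik leqNgt (leq_trans kK KL).
Qed.

Lemma copid_mx_split (K : 'I_n) :
  (@copid_mx F n K <= (delta_mx 0 K : 'rV_n) + copid_mx K.+1)%MS.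
Proof.
apply/row_subP => i; move: (row_sub i (@copid_mx F n K)).
move: (row i _) => v /sub_copid_mxP v0.
rewrite -[v](addrNK (v 0 K *: delta_mx 0 K)) addrC addmx_sub_adds ?scalemx_sub //.
apply/sub_copid_mxP => k kK; rewrite !mxE eqxx /=.
have [-> | kK'] := eqVneq k K; first by rewrite mulr1 subrr.
by rewrite mulr0 subr0 v0 // ltn_neqAle -ltnS kK andbT val_eqE.
Qed.

Lemma copid_mx_exchange m (S : 'M[F]_(m, n)) v K :
  (v <= copid_mx K)%MS -> ~~ (v <= S)%MS -> (copid_mx K.+1 <= S)%MS ->
  (copid_mx K <= v + S)%MS.
Proof.
move=> vK vS KS; have [Kn | nK] := ltnP K n; last first.
  case/negP: vS; have /sub_copid_mxP v0 := vK.
  suff -> : v = 0 by apply: sub0mx.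
  by apply/rowP => k; rewrite mxE v0 // (leq_trans (ltn_ord k)).
have /= splitK := copid_mx_split (Ordinal Kn).
have sub_dS : (@copid_mx F n K <= (delta_mx 0 (Ordinal Kn) : 'rV_n) + S)%MS.
  exact: submx_trans splitK (addsmxS (submx_refl _) KS).
have dvS := sub_adds_exchange (submx_trans vK sub_dS) vS.
by apply: submx_trans sub_dS _; rewrite addsmx_sub dvS addsmxSr.
Qed.

End CoordinateSubspaces.

Section Spans.
Variables (R : realType) (n : nat).
Local Notation pt := (pt R n).
Local Notation vf := (vf R n).
Local Notation distr := (distr R n).
Local Notation spanat := (@spanat R n).
Implicit Types (L M : distr) (x : pt).

Lemma mem_spanat L v x : v \in L -> (v x <= spanat L x)%MS.
Proof.
move=> vL; have iL : (index v L < size L)%N by rewrite index_mem.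
rewrite (_ : v x = row (Ordinal iL) (spanat L x)) ?row_sub //.
by apply/rowP => k; rewrite !mxE /= nth_index.
Qed.

Lemma spanat_subP L x m (S : 'M[R]_(m, n)) :
  reflect (forall v, v \in L -> (v x <= S)%MS) (spanat L x <= S)%MS.
Proof.
apply: (iffP idP) => [sLS v vL | sub]; first exact: submx_trans (mem_spanat _ vL) sLS.
apply/row_subP => i; rewrite (_ : row i _ = nth (fun=> 0) L i x).
  exact/sub/mem_nth.
by apply/rowP => k; rewrite !mxE.
Qed.

Lemma spanat_cat L M x : (spanat (L ++ M) x :=: spanat L x + spanat M x)%MS.
Proof.
apply/eqmxP/andP; split.
  apply/spanat_subP => v; rewrite mem_cat => /orP[] vL.
    exact: submx_trans (mem_spanat _ vL) (addsmxSl _ _).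
  exact: submx_trans (mem_spanat _ vL) (addsmxSr _ _).
rewrite addsmx_sub; apply/andP; split; apply/spanat_subP => v vL;
  by apply: mem_spanat; rewrite mem_cat vL ?orbT.
Qed.

Lemma spanat_seq1 v x : (spanat [:: v] x :=: v x)%MS.
Proof.
apply/eqmxP/andP; split; last by apply: mem_spanat; rewrite inE.
by apply/spanat_subP => w; rewrite inE => /eqP ->.
Qed.

Lemma spanat_cat1 L v x : (spanat (L ++ [:: v]) x :=: spanat L x + v x)%MS.
Proof. exact: eqmx_trans (spanat_cat _ _ _) (adds_eqmx (eqmx_refl _) (spanat_seq1 _ _)). Qed.

Lemma spanat_cat2 L u v x :
  (spanat (L ++ [:: u; v]) x :=: spanat L x + (u x + v x))%MS.
Proof.
have -> : L ++ [:: u; v] = (L ++ [:: u]) ++ [:: v] by rewrite -catA.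
rewrite addsmxA; apply: eqmx_trans (spanat_cat1 _ _ _) _.
exact: adds_eqmx (spanat_cat1 _ _ _) (eqmx_refl _).
Qed.

End Spans.

Section Dseq.
Variables (R : realType) (n : nat) (a b1 b2 : vf R n).
Local Notation D := (Dseq a b1 b2).
Local Notation u k := (iter k (bracket a) b1).
Local Notation w k := (iter k (bracket a) b2).

Lemma DseqSS j : D j.+2 = D j.+1 ++ adD a (D j.+1).
Proof. by []. Qed.

Lemma mem_Dseq j v : v \in D j -> exists2 k, (k < j)%N & v = u k \/ v = w k.
Proof.
elim: j v => [//|[|j] IH] v.
  by rewrite !inE => /orP[]/eqP ->; exists 0%N; [|left| |right].
rewrite DseqSS mem_cat => /orP[/IH [k kj e]|/mapP [v' /IH [k kj e] ->]].
  by exists k => //; apply: leqW.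
by exists k.+1 => //; case: e => ->; [left|right].
Qed.

Lemma iter_mem_Dseq j k : (k < j)%N -> u k \in D j /\ w k \in D j.
Proof.
elim: j k => [//|[|j] IH] k.
  rewrite ltnS leqn0 => /eqP ->.
  by split; [apply: mem_head | apply: (mem_last b1 [:: b2])].
rewrite ltnS leq_eqVlt DseqSS !mem_cat => /orP[/eqP ->|kj].
  have [uj wj] := IH j (ltnSn j).
  by split; apply/orP; right; [apply: (map_f _ uj) | apply: (map_f _ wj)].
by have [uk wk] := IH k kj; split; apply/orP; left.
Qed.

Lemma iter_sub_spanat_Dseq j k x : (k < j)%N ->
  (u k x <= spanat (D j) x)%MS /\ (w k x <= spanat (D j) x)%MS.
Proof.
by case/iter_mem_Dseq => uk wk; split; [apply: (mem_spanat x uk) | apply: (mem_spanat x wk)].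
Qed.

Lemma spanat_DseqS j x :
  (spanat (D j.+1) x :=: spanat (D j) x + (u j x + w j x))%MS.
Proof.
apply/eqmxP/andP; split.
  apply/spanat_subP => v /mem_Dseq [k]; rewrite ltnS leq_eqVlt => /orP[/eqP->|kj].
    by case=> ->; apply: submx_trans (addsmxSr _ _); [apply: addsmxSl | apply: addsmxSr].
  by have [uk wk] := iter_sub_spanat_Dseq x kj; case=> ->; apply: submx_trans (addsmxSl _ _).
have [uj wj] := iter_sub_spanat_Dseq x (ltnSn j).
rewrite !addsmx_sub; apply/and3P; split=> //.
by apply/spanat_subP => v /mem_Dseq [k /leqW/(iter_sub_spanat_Dseq x) [uk wk]] [] ->.
Qed.

Lemma spanat_adD_Dseq j x : (spanat (adD a (D j)) x <= spanat (D j.+1) x)%MS.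
Proof.
apply/spanat_subP => _ /mapP [v /mem_Dseq [k kj e] ->].
have [uk wk] := iter_sub_spanat_Dseq x (kj : k.+1 < j.+1)%N.
by case: e => ->; rewrite -iterS.
Qed.

Lemma smooth_vf_Dseq j v : smooth_vf a -> smooth_vf b1 -> smooth_vf b2 ->
  v \in D j -> smooth_vf v.
Proof. by move=> sa sb1 sb2 /mem_Dseq [k _ [] ->]; apply: smooth_vf_iter. Qed.

End Dseq.

Section DifferentiableMatrices.
Variables (R : realType) (n : nat).
Local Notation pt := (pt R n).

Lemma differentiable_bigsum (I : Type) (r : seq I) (F : I -> pt -> R) x :
  (forall i, differentiable (F i) x) ->
  differentiable (fun y => \sum_(i <- r) F i y) x.
Proof.
move=> dF; elim: r => [|i r IH].
  by under eq_fun do rewrite big_nil; apply: differentiable_cst.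
by under eq_fun do rewrite big_cons; apply: differentiableD.
Qed.

Lemma differentiable_bigprod (I : Type) (r : seq I) (F : I -> pt -> R) x :
  (forall i, differentiable (F i) x) ->
  differentiable (fun y => \prod_(i <- r) F i y) x.
Proof.
move=> dF; elim: r => [|i r IH].
  by under eq_fun do rewrite big_nil; apply: differentiable_cst.
by under eq_fun do rewrite big_cons; apply: differentiableM.
Qed.

Lemma differentiable_det r (F : pt -> 'M[R]_r) x :
  (forall i j, differentiable (fun y => F y i j) x) ->
  differentiable (fun y => \det (F y)) x.
Proof.
move=> dF; apply: differentiable_bigsum => s.
apply: differentiableM; first exact: differentiable_cst.
by apply: differentiable_bigprod => i; apply: dF.
Qed.

Lemma differentiable_adj r (F : pt -> 'M[R]_r) x :
  (forall i j, differentiable (fun y => F y i j) x) ->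
  forall i j, differentiable (fun y => \adj (F y) i j) x.
Proof.
move=> dF i j; under eq_fun do rewrite mxE /cofactor.
apply: differentiableM; first exact: differentiable_cst.
by apply: differentiable_det => p q; under eq_fun do rewrite !mxE; apply: dF.
Qed.

End DifferentiableMatrices.

Section LocalFrames.
Variables (R : realType) (n : nat) (E : distr R n).
Hypothesis smooth_E : forall e, e \in E -> smooth_vf e.
Local Notation pt := (pt R n).

Lemma differentiable_minor r (f : 'I_r -> 'I_(size E)) (h : 'I_r -> 'I_n) x i j :
  differentiable (fun y => colsub h (rowsub f (spanat E y)) i j) x.
Proof. by under eq_fun do rewrite !mxE; apply/smooth_differentiable/smooth_E/mem_nth. Qed.

Lemma near_unitmx_minor r (f : 'I_r -> 'I_(size E)) (h : 'I_r -> 'I_n) x0 :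
  colsub h (rowsub f (spanat E x0)) \in unitmx ->
  \forall y \near x0, colsub h (rowsub f (spanat E y)) \in unitmx.
Proof.
rewrite unitmxE unitfE => det0.
have /differentiable_continuous ddet := differentiable_det (differentiable_minor f h x0).
near=> y; rewrite unitmxE unitfE; near: y.
exact: (@cvgr_neq0 _ _ _ (nbhs x0) _ _ _ ddet det0).
Unshelve. all: by end_near.
Qed.

Lemma rankat_lsc x0 : \forall y \near x0, (rankat E x0 <= rankat E y)%N.
Proof.
have [f [h U0]] := unitmx_minor_exists (spanat E x0).
apply: filterS (near_unitmx_minor U0) => y /rank_unitmx_colsub rk.
by rewrite /rankat -{1}rk mxrankS ?rowsub_sub.
Qed.

Lemma subdistr_eq_near (F : distr R n) x0 :
  (forall y, (spanat E y <= spanat F y)%MS) -> (spanat F x0 <= spanat E x0)%MS ->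
  (\forall y \near x0, rankat F y = rankat F x0) ->
  \forall y \near x0, (spanat F y <= spanat E y)%MS /\ rankat E y = rankat E x0.
Proof.
move=> sub_EF sub_FE0 rank_F.
have rk0 : rankat E x0 = rankat F x0 by apply/eqP; rewrite eqn_leq !mxrankS.
near=> y.
have lsc : (rankat E x0 <= rankat E y)%N by near: y; apply: rankat_lsc.
have rkFy : rankat F y = rankat F x0 by near: y.
have rkEy : rankat E y = rankat F y.
  by apply/eqP; rewrite eqn_leq mxrankS //= -/(rankat F y) rkFy -rk0.
split; last by rewrite rkEy rkFy rk0.
by rewrite -(mxrank_leqif_sup (sub_EF y)).2; apply/eqP/esym.
Unshelve. all: by end_near.
Qed.

Lemma local_frame_coef (g : vf R n) x0 : smooth_vf g ->
  (\forall y \near x0, rankat E y = rankat E x0) ->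
  (\forall y \near x0, (g y <= spanat E y)%MS) ->
  exists (f : 'I_(rankat E x0) -> 'I_(size E)) (c : 'I_(rankat E x0) -> pt -> R),
    (forall i, differentiable (c i) x0) /\
    \forall y \near x0, g y = \sum_i c i y *: nth (fun=> 0) E (f i) y.
Proof.
move=> sg rk gE; have [f [h U0]] := unitmx_minor_exists (spanat E x0).
pose M y := colsub h (rowsub f (spanat E y)).
(* Cramer's rule for the nonsingular minor [M y] of the frame. *)
pose c i y := (\det (M y))^-1 * \sum_j g y 0 (h j) * \adj (M y) j i.
have detM0 : \det (M x0) != 0 by rewrite -unitfE -unitmxE.
exists f, c; split=> [i|].
  apply: differentiableM.
    exact/differentiableV/detM0/differentiable_det/differentiable_minor.
  apply: differentiable_bigsum => j; apply: differentiableM.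
    exact: smooth_differentiable.
  exact/differentiable_adj/differentiable_minor.
near=> y.
have Uy : M y \in unitmx by near: y; apply: near_unitmx_minor.
have rky : rankat E y = rankat E x0 by near: y.
have gy : (g y <= spanat E y)%MS by near: y.
have /submxP [c' gc'] : (g y <= rowsub f (spanat E y))%MS.
  apply: submx_trans gy _; rewrite -(mxrank_leqif_sup (rowsub_sub _ _)).2.
  by rewrite (rank_unitmx_colsub Uy); apply/eqP/esym.
rewrite gc' mulmx_sum_row; apply: eq_bigr => i _.
congr (_ *: _); last by apply/rowP => k; rewrite !mxE.
rewrite (coef_unitmx_minor c' Uy) -gc' -/(M y) !mxE; congr (_ * _).
by apply: eq_bigr => j _; rewrite !mxE.
Unshelve. all: by end_near.
Qed.

Lemma bracket_sub_spanat_adD (a g : vf R n) x0 : smooth_vf a -> smooth_vf g ->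
  (\forall y \near x0, rankat E y = rankat E x0) ->
  (\forall y \near x0, (g y <= spanat E y)%MS) ->
  (bracket a g x0 <= spanat (E ++ adD a E) x0)%MS.
Proof.
move=> sa sg rk gE; have [f [c [dc gc]]] := local_frame_coef sg rk gE.
have fE i : nth (fun=> 0) E (f i) \in E by apply: mem_nth.
rewrite (bracket_lincomb sa sg (fun i => smooth_E (fE i)) dc gc).
apply: summx_sub => i _; apply: addmx_sub; apply: scalemx_sub; apply: mem_spanat.
  by rewrite mem_cat fE.
by rewrite mem_cat /adD map_f ?orbT.
Qed.

End LocalFrames.

Section RankStall.
Variables (R : realType) (n : nat) (a b1 b2 : vf R n).
Hypotheses (sa : smooth_vf a) (sb1 : smooth_vf b1) (sb2 : smooth_vf b2).
Local Notation D := (Dseq a b1 b2).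
Local Notation u k := (iter k (bracket a) b1).
Local Notation w k := (iter k (bracket a) b2).

Lemma bracket_sub_Dseq j (xi eta : vf R n) x0 :
  smooth_vf xi -> smooth_vf eta ->
  (forall y, (spanat (D j.+1) y :=: spanat (D j) y + (xi y + eta y))%MS) ->
  (\forall y \near x0, rankat (D j.+1) y = rankat (D j.+1) x0) ->
  (spanat (D j.+1) x0 <= spanat (D j) x0 + xi x0)%MS ->
  (bracket a eta x0 <= spanat (D j.+1) x0 + bracket a xi x0)%MS.
Proof.
move=> sxi seta Dxe rk Dxi0; pose E := D j ++ [:: xi].
(* By constant rank E spans D_(j+1) near x0, so eta is a smooth section of E there. *)
have spanE y : (spanat E y :=: spanat (D j) y + xi y)%MS := spanat_cat1 _ _ _.
have sE e : e \in E -> smooth_vf e.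
  rewrite mem_cat => /orP[eD | ]; first exact: smooth_vf_Dseq sa sb1 sb2 eD.
  by rewrite inE => /eqP ->.
have EF y : (spanat E y <= spanat (D j.+1) y)%MS by rewrite spanE Dxe addsmxS ?addsmxSl.
have FE0 : (spanat (D j.+1) x0 <= spanat E x0)%MS by rewrite spanE.
have near_EF := subdistr_eq_near sE EF FE0 rk.
have eta_E : \forall y \near x0, (eta y <= spanat E y)%MS.
  apply: filterS near_EF => y [DE _]; apply: submx_trans DE.
  by rewrite Dxe; apply: submx_trans (addsmxSr _ _) (addsmxSr _ _).
have rkE : \forall y \near x0, rankat E y = rankat E x0.
  by apply: filterS near_EF => y [].
have adE : adD a E = adD a (D j) ++ [:: bracket a xi] by rewrite /adD map_cat.
have sub_target B : (B <= spanat (D j.+1) x0)%MS ->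
    (B <= spanat (D j.+1) x0 + bracket a xi x0)%MS.
  by move/submx_trans; apply; apply: addsmxSl.
apply: submx_trans (bracket_sub_spanat_adD sE sa seta rkE eta_E) _.
rewrite spanat_cat addsmx_sub spanE adE spanat_cat1 !addsmx_sub addsmxSr.
rewrite !sub_target ?spanat_adD_Dseq // Dxe ?addsmxSl //.
exact: submx_trans (addsmxSl _ _) (addsmxSr _ _).
Qed.

Lemma rankat_Dseq_stall j x0 :
  (\forall y \near x0, rankat (D j.+1) y = rankat (D j.+1) x0) ->
  (rankat (D j.+1) x0 <= rankat (D j) x0 + 1)%N ->
  (rankat (D j.+2) x0 <= rankat (D j.+1) x0 + 1)%N.
Proof.
move=> rk le1.
have rank_bracket_le xi eta : smooth_vf xi -> smooth_vf eta ->
    (forall y, (spanat (D j.+1) y :=: spanat (D j) y + (xi y + eta y))%MS) ->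
    (spanat (D j.+1) x0 <= spanat (D j) x0 + xi x0)%MS ->
    (\rank (spanat (D j.+1) x0 + (bracket a xi x0 + bracket a eta x0))
       <= rankat (D j.+1) x0 + 1)%N.
  move=> sxi seta Dxe Dxi; apply: (mxrank_sub_adds_row (v := bracket a xi x0)).
  rewrite addsmx_sub; apply/andP; split; first exact: addsmxSl.
  rewrite addsmx_sub; apply/andP; split; first exact: addsmxSr.
  exact: bracket_sub_Dseq.
have [su sw] : smooth_vf (u j) /\ smooth_vf (w j) by split; apply: smooth_vf_iter.
have [Du | Dw] : (spanat (D j.+1) x0 <= spanat (D j) x0 + u j x0)%MS \/
                 (spanat (D j.+1) x0 <= spanat (D j) x0 + w j x0)%MS.
  rewrite !spanat_DseqS; apply: adds_rank_le1.
  by move: le1; rewrite /rankat (spanat_DseqS _ _ _ j x0).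
all: rewrite /rankat (spanat_DseqS _ _ _ j.+1 x0).
  by apply: (rank_bracket_le _ _ su sw _ Du) => y; apply: spanat_DseqS.
rewrite [(u j.+1 x0 + _)%MS]addsmxC; apply: (rank_bracket_le _ _ sw su _ Dw) => y.
by rewrite [(w j y + _)%MS]addsmxC; apply: spanat_DseqS.
Qed.

End RankStall.

Section TriangularDrift.
Variables (R : realType) (n : nat) (a b1 : vf R n) (U : set (pt R n)) (p : nat).
Hypotheses (sa : smooth_vf a) (ta : triangular a) (sb1 : smooth_vf b1) (oU : open U).
Local Notation b2 := (@coordvf R n n).
Local Notation D := (Dseq a b1 b2).
Local Notation u k := (iter k (bracket a) b1).
Local Notation w k := (iter k (bracket a) b2).
Hypothesis rank_cst : forall i, (i <= p.+1)%N ->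
  forall x y, U x -> U y -> rankat (D i) x = rankat (D i) y.
Hypothesis rank_gap : forall x, U x -> rankat (D p.+1) x = (rankat (D p) x + 2)%N.

Lemma iter_b2_notin j y : (j <= p)%N -> U y -> ~~ (w j y <= spanat (D j) y)%MS.
Proof.
move=> jp Uy; apply/negP => wD.
have stall d : (j + d <= p)%N ->
    (rankat (D (j + d).+1) y <= rankat (D (j + d)) y + 1)%N.
  elim: d => [_ | d IH jdp].
    rewrite addn0; apply: (mxrank_sub_adds_row (v := u j y)).
    rewrite spanat_DseqS addsmx_sub; apply/andP; split; first exact: addsmxSl.
    rewrite addsmx_sub; apply/andP; split; first exact: addsmxSr.
    exact: submx_trans wD (addsmxSl _ _).
  rewrite addnS; apply: rankat_Dseq_stall => //; last by apply/IH/ltnW; rewrite -addnS.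
    exact: smooth_vf_coordvf.
  apply: filterS (open_nbhs_nbhs (conj oU Uy)) => z Uz.
  by apply: rank_cst => //; lia.
by have := stall (p - j)%N; rewrite subnKC // rank_gap //; lia.
Qed.

Lemma iter_b2_vanishes i : vanishes_below (n - i.+1) (w i).
Proof.
have := vanishes_below_iter (i := i) sa ta (@smooth_vf_coordvf R n n)
  (@vanishes_below_coordvf R n n).
by rewrite -subn1 -subnDA add1n.
Qed.

Lemma copid_sub_Dseq i y : (i <= p.+1)%N -> U y ->
  (copid_mx (n - i) <= spanat (D i) y)%MS.
Proof.
move=> + Uy; elim: i => [_ | i IH ip]; first by rewrite subn0 /copid_mx pid_mx_1 subrr sub0mx.
have w_tail : (w i y <= copid_mx (n - i.+1))%MS.
  by apply/sub_copid_mxP => k; apply: iter_b2_vanishes.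
have tail_D : (copid_mx (n - i.+1).+1 <= spanat (D i) y)%MS.
  by apply: submx_trans (IH (ltnW ip)); apply: copid_mxS; lia.
have w_notin := iter_b2_notin (ip : (i < p.+1)%N) Uy.
apply: submx_trans (copid_mx_exchange w_tail w_notin tail_D) _.
rewrite spanat_DseqS addsmx_sub; apply/andP; split; last exact: addsmxSl.
exact: submx_trans (addsmxSr _ _) (addsmxSr _ _).
Qed.

Lemma ltn_index_dim j y : (j <= p)%N -> U y -> (j < n)%N.
Proof.
move=> jp Uy; rewrite ltnNge; apply: contra (iter_b2_notin jp Uy) => nj.
apply: submx_trans (copid_sub_Dseq (leqW jp) Uy).
by apply/sub_copid_mxP => k kL; apply: iter_b2_vanishes; move: kL; lia.
Qed.

Section LastStep.
Variables (q : nat) (y : pt R n).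
Hypotheses (qp : (q < p)%N) (Uy : U y).
Local Notation v2 := (@coordvf R n (n - q)).

Lemma iter_b2_sub_coordvf : (w q y <= spanat (D q) y + v2 y)%MS.
Proof.
have qn := ltn_index_dim (ltnW qp) Uy.
have Kn : (n - q.+1 < n)%N by lia.
have v2E : v2 y = delta_mx 0 (Ordinal Kn).
  by rewrite -(coordvfE _ y) /=; congr coordvf; lia.
have w_tail : (w q y <= copid_mx (n - q.+1))%MS.
  by apply/sub_copid_mxP => k; apply: iter_b2_vanishes.
have /= splitK := copid_mx_split R (Ordinal Kn).
apply: submx_trans w_tail (submx_trans splitK _).
rewrite v2E [(spanat _ _ + _)%MS]addsmxC; apply: addsmxS => //.
have -> : (n - q.+1).+1 = (n - q)%N by lia.
by apply: copid_sub_Dseq Uy; lia.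
Qed.

Lemma coordvf_sub_Dseq : (v2 y <= spanat (D q.+1) y)%MS.
Proof.
apply: submx_trans (copid_sub_Dseq (leqW qp) Uy).
by apply/sub_copid_mxP => k kq; apply: vanishes_below_coordvf; rewrite -subnS.
Qed.

Lemma spanat_Dseq_coordvf : (spanat (D q.+1) y == spanat (D q ++ [:: u q; v2]) y)%MS.
Proof.
have [uq _] := iter_sub_spanat_Dseq a b1 b2 y (ltnSn q).
apply/andP; split; rewrite spanat_cat2.
  rewrite spanat_DseqS addsmx_sub addsmxSl addsmx_sub /=; apply/andP; split.
    exact: submx_trans (addsmxSl _ _) (addsmxSr _ _).
  apply: submx_trans iter_b2_sub_coordvf _.
  exact: addsmxS (submx_refl _) (addsmxSr _ _).
rewrite !addsmx_sub coordvf_sub_Dseq uq /= andbT.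
by rewrite spanat_DseqS addsmxSl.
Qed.

Lemma coordvf_notin : ~~ (v2 y <= spanat (D q) y)%MS.
Proof.
apply: contra (iter_b2_notin (ltnW qp) Uy) => v2D.
apply: submx_trans iter_b2_sub_coordvf _.
by rewrite addsmx_sub; apply/andP; split.
Qed.

Lemma bracket_coordvf_sub : (bracket v2 (bracket v2 a) y <= spanat (D q.+2) y)%MS.
Proof.
have sv2 : smooth_vf v2 := @smooth_vf_coordvf R n (n - q).
have v2_0 : vanishes_below (n - q.+1) v2 by rewrite subnS; apply: vanishes_below_coordvf.
have av2 := vanishes_below_bracket_triangular sa ta sv2 v2_0.
have v2a : vanishes_below (n - q.+2) (bracket v2 a).
  by move=> x k kq; rewrite bracket_antisym mxE av2 ?oppr0 // -subnS.
have v2_0' : vanishes_below (n - q.+2) v2 by apply: vanishes_belowW v2_0; lia.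
have := vanishes_below_bracket sv2 (smooth_vf_bracket sv2 sa) v2_0' v2a.
move=> v0; apply: submx_trans (copid_sub_Dseq _ Uy); last by lia.
by apply/sub_copid_mxP => k; apply: v0.
Qed.

Lemma coordvf_candidate :
  [/\ (spanat (D q.+1) y == spanat (D q ++ [:: u q; v2]) y)%MS,
      (bracket v2 (bracket v2 a) y <= spanat (D q.+2) y)%MS,
      (v2 y <= spanat (D q.+1) y)%MS & ~~ (v2 y <= spanat (D q) y)%MS].
Proof.
split; [exact: spanat_Dseq_coordvf | exact: bracket_coordvf_sub |
        exact: coordvf_sub_Dseq | exact: coordvf_notin].
Qed.

End LastStep.

End TriangularDrift.

Section GeneralTriangularForm.
Variables (R : realType) (n k1 k2 : nat) (aa bb : nat -> pt R n -> R).

Lemma smooth_zc j : smooth (fun x : pt R n => zc x j).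
Proof.
by rewrite /zc; case: insubP => [t _ _|_] /=; [apply: smooth_coord | apply: smooth_cst].
Qed.

Lemma smooth_vf_gtf_a : (forall l, (k1 + k2 <= l < n)%N -> smooth (aa l)) ->
  smooth_vf (gtf_a k1 k2 aa).
Proof.
move=> saa k; rewrite /gtf_a; under [in smooth _]eq_fun do rewrite mxE.
case: (k.+1 < k1)%N; first exact: smooth_zc.
case: (k1 < k.+1 < k1 + k2)%N; first exact: smooth_zc.
by case: (boolP (k1 + k2 <= k.+1 < n)%N) => [/saa | _] //; apply: smooth_cst.
Qed.

Lemma smooth_vf_gtf_b1 : (forall l, (k1 + k2 <= l < n)%N -> smooth (bb l)) ->
  smooth_vf (gtf_b1 k1 k2 bb).
Proof.
move=> sbb k; rewrite /gtf_b1; under [in smooth _]eq_fun do rewrite mxE.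
case: (k.+1 == k1); first exact: smooth_cst.
by case: (boolP (k1 + k2 <= k.+1 < n)%N) => [/sbb | _] //; apply: smooth_cst.
Qed.

Lemma triangular_gtf_a : (forall l, (k1 + k2 <= l < n)%N -> forall x y : pt R n,
    (forall j, (1 <= j <= l.+1)%N -> zc x j = zc y j) -> aa l x = aa l y) ->
  triangular (gtf_a k1 k2 aa).
Proof.
move=> dep k x y xy; rewrite /gtf_a !mxE.
have zcE j : (j <= k.+2)%N -> zc x j = zc y j.
  by move=> jk; rewrite /zc; case: insubP => [t _ tj|] //=; apply: xy; rewrite tj; lia.
do 2?[case: ifP => _; first exact: zcE].
by case: ifP => // /dep; apply=> j /andP [_ /zcE].
Qed.

End GeneralTriangularForm.

Theorem lemma2 (R : realType) (n k1 k2 : nat) (aa bb : nat -> pt R n -> R)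
  (U : set (pt R n)) (p : nat) :
  (1 <= k1)%N -> (1 <= k2)%N -> (k1 + k2 <= n)%N ->
  (* smoothness and triangular dependence of a^l, b^l, l = k1+k2 .. n-1 *)
  (forall l, (k1 + k2 <= l < n)%N -> smooth (aa l) /\ smooth (bb l)) ->
  (forall l, (k1 + k2 <= l < n)%N -> forall x y : pt R n,
     (forall j, (1 <= j <= l.+1)%N -> zc x j = zc y j) ->
     aa l x = aa l y /\ bb l x = bb l y) ->
  (* local at generic points: U is a nonempty open set *)
  open U -> (exists x0, U x0) ->
  ((k1 + k2 < n)%N -> forall x, U x -> bb (k1 + k2) x != 0) ->
  (forall l, (k1 + k2 <= l < n)%N -> forall x, U x ->
     partialz l.+1 (aa l) x != 0 \/ partialz l.+1 (bb l) x != 0) ->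
  let a := gtf_a k1 k2 aa in
  let b1 := gtf_b1 k1 k2 bb in
  let b2 := @gtf_b2 R n in
  let D := Dseq a b1 b2 in
  (1 <= p)%N ->
  (* distributions have locally constant rank *)
  (forall i, (i <= p.+1)%N -> forall x y, U x -> U y ->
     rankat (D i) x = rankat (D i) y) ->
  (forall i, (1 <= i <= p)%N -> involutive_on (D i) U) ->
  ~ involutive_on (D p.+1) U ->
  (forall x, U x -> (spanat (D p.-1) x <= spanat (D p) x)%MS /\
                    (spanat (D p) x <= spanat (D p.+1) x)%MS /\
                    rankat (D p) x = (rankat (D p.-1) x + 2)%N /\
                    rankat (D p.+1) x = (rankat (D p) x + 2)%N) ->
  ~ subset_cauchy (D p) (D p.+1) U ->
  (forall x, U x -> (spanat (adD a (D p.-1)) x <= spanat (D p) x)%MS) ->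
  (forall x, U x -> (spanat (D p.+1) x == spanat (D p ++ adD a (D p)) x)%MS) ->
  let v1 := iter p.-1 (bracket a) b1 in
  let v2 := @coordvf R n (n - p.-1) in
  let Q := fun al1 al2 : R => fun x =>
     al1 ^+ 2 *: bracket v1 (bracket v1 a) x
     + (2 * al1 * al2) *: bracket v1 (bracket v2 a) x
     + al2 ^+ 2 *: bracket v2 (bracket v2 a) x in
  let vc := fun x => 0 *: v1 x + 1 *: v2 x in
  forall x, U x ->
    (spanat (D p) x == spanat (D p.-1 ++ [:: v1; v2]) x)%MS /\
    (Q 0 1 x <= spanat (D p.+1) x)%MS /\
    vc = @coordvf R n (n - p.-1) /\
    (vc x <= spanat (D p) x)%MS /\ ~~ (vc x <= spanat (D p.-1) x)%MS.
Proof.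
move=> _ _ _ smooth_ab dep_ab oU _ _ _ a b1 b2 D p_gt0 rank_cst _ _ ranks _ _ _
  v1 v2 Q vc x Ux.
have sa : smooth_vf a by apply: smooth_vf_gtf_a => l /smooth_ab [].
have sb1 : smooth_vf b1 by apply: smooth_vf_gtf_b1 => l /smooth_ab [].
have ta : triangular a by apply: triangular_gtf_a => l /dep_ab dep y z /dep [].
have rank_gap y : U y -> rankat (D p.+1) y = (rankat (D p) y + 2)%N.
  by case/ranks => _ [_ []].
have [q Ep] : exists q, p = q.+1 by exists p.-1; rewrite prednK.
subst p.
have [span_eq Q_sub v2_sub v2_notin] :=
  coordvf_candidate sa ta sb1 oU rank_cst rank_gap (ltnSn q) Ux.
have vcE : vc = v2 by apply/funext => y; rewrite /vc scale0r add0r scale1r.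
have QE : Q 0 1 x = bracket v2 (bracket v2 a) x.
  (* Generalizing the brackets keeps the rewrites below from unfolding them. *)
  suff QE' (A B C : 'rV[R]_n) : 0 ^+ 2 *: A + (2 * 0 * 1) *: B + 1 ^+ 2 *: C = C.
    exact: QE'.
  by rewrite expr2 !(mul0r, mulr0) !scale0r !add0r expr1n scale1r.
by rewrite vcE QE; split; last split; last split; last split.
Qed.
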